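(* For every positive integer $k$, there exists a digraph $G \in \mathcal{C}_3$ such that $\vec{\chi}(G) \geq k$.
   Context: All digraphs are finite and simple: no loops, no multiple arcs, and for two distinct vertices $u,v$ at most one of the arcs $uv$, $vu$ is present. A $k$-dicolouring of a digraph $D$ is a partition of $V(D)$ into $k$ sets $V_1,\dots,V_k$ (some possibly empty) such that each induced subdigraph $D[V_i]$ is acyclic (contains no directed cycle). The dichromatic number $\vec{\chi}(D)$ is the smallest $k$ such that $D$ admits a $k$-dicolouring. $TT_3$ denotes the transitive tournament on 3 vertices (a triangle oriented acyclically); a directed triangle is a directed cycle of length 3. $\mathcal{C}_3$ is the class of digraphs that contain no $TT_3$ as a subdigraph and contain no induced directed cycle of length at least $4$ (so every induced directed cycle is a directed triangle). *)

From mathcomp Require Import all_boot.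
Set Implicit Arguments. Unset Strict Implicit. Unset Printing Implicit Defensive.

Definition simple_digraph (T : finType) (e : rel T) : Prop :=
  (forall v, ~~ e v v) /\ (forall u v, ~~ (e u v && e v u)).

Definition dicycle (T : finType) (e : rel T) (s : seq T) : Prop :=
  [/\ 0 < size s, uniq s & cycle e s].

Definition acyclic_on (T : finType) (e : rel T) (A : {pred T}) : Prop :=
  forall s : seq T, {subset s <= A} -> ~ dicycle e s.

Definition dicolouring (T : finType) (e : rel T) (k : nat) (f : T -> 'I_k) : Prop :=
  forall i : 'I_k, acyclic_on e [pred x | f x == i].

Definition dicolourable (T : finType) (e : rel T) (k : nat) : Prop :=
  exists f : T -> 'I_k, dicolouring e f.

Definition dichromatic_ge (T : finType) (e : rel T) (k : nat) : Prop :=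
  forall j, j < k -> ~ dicolourable e j.

Definition has_TT3 (T : finType) (e : rel T) : Prop :=
  exists a b c : T, [/\ e a b, e b c & e a c].

Definition induced_dicycle (T : finType) (e : rel T) (s : seq T) : Prop :=
  dicycle e s /\ (forall x y, x \in s -> y \in s -> e x y -> y = next s x).

Definition in_C3 (T : finType) (e : rel T) : Prop :=
  ~ has_TT3 e /\ ~ (exists s : seq T, induced_dicycle e s /\ 4 <= size s).

From mathcomp Require Import all_boot zify.
Set Implicit Arguments. Unset Strict Implicit. Unset Printing Implicit Defensive.

(* Take the increasing triples a < b < c below N, with shift arcs
   (a,b,c) -> (b,c,d) and back arcs x -> y whenever the least entry of x is the
   largest entry of y.  Back arcs decrease the top entry, so along a cycle the
   vertex x with least top entry is followed by two shifts x -> y -> z, and then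
   z -> x is a back arc: every induced dicycle is a triangle.  A dicolouring f
   leaves no shift triangle (a,b,c) -> (b,c,d) -> (c,d,e) monochromatic.  Put
   S(c,d) = {f(a,c,d) | a < c} and T(c,d) = {f(b,c,d) | b < c, f(b,c,d) in S(b,c)};
   if (S,T)(c,d) = (S,T)(d,e) then f(c,d,e) lies in T(d,e) = T(c,d), which
   produces a monochromatic shift triangle.  Hence d |-> {(S,T)(c,d) | c < d}
   is injective and N is at most doubly exponential in the number of colours. *)

Section InducedDicycles.
Variables (T : finType) (e : rel T).

Lemma induced_dicycle_rot (n : nat) (s : seq T) :
  induced_dicycle e s -> induced_dicycle e (rot n s).
Proof.
move=> [[s_gt0 s_uniq s_cycle] s_ind]; split.
  by split; rewrite ?size_rot ?rot_uniq ?rot_cycle.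
by move=> x y; rewrite !mem_rot next_rot //; apply: s_ind.
Qed.

Lemma induced_dicycle_no_back_chord (x y z w : T) (r : seq T) :
  induced_dicycle e [:: x, y, z, w & r] -> ~~ e z x.
Proof.
move=> [[_ s_uniq _] s_ind]; apply/negP => ezx.
have := s_ind z x; rewrite !inE !eqxx !orbT => /(_ isT isT ezx).
move: s_uniq; rewrite /= !inE => /and4P [xNs yNs zNs _].
have [zx|_] := eqVneq z x; first by rewrite zx eqxx orbT in xNs.
have [zy|_] := eqVneq z y; first by rewrite zy eqxx in yNs.
by rewrite eqxx => xw; rewrite xw eqxx !orbT in xNs.
Qed.

End InducedDicycles.

Section ShiftDigraph.
Variable N : nat.

Definition triple := ('I_N * 'I_N * 'I_N)%type.

Definition lo (x : triple) : nat := x.1.1.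
Definition mid (x : triple) : nat := x.1.2.
Definition hi (x : triple) : nat := x.2.

Definition increasing (x : triple) : bool := (lo x < mid x) && (mid x < hi x).

(* Triples that are not increasing are isolated vertices. *)
Definition shift_arc : rel triple := fun x y =>
  [&& increasing x, increasing y &
      (mid x == lo y) && (hi x == mid y) || (lo x == hi y)].

Lemma shift_arc_simple : simple_digraph shift_arc.
Proof. by split=> [v|u v]; rewrite /shift_arc /increasing; lia. Qed.

Lemma shift_arc_TT3_free : ~ has_TT3 shift_arc.
Proof. by move=> [a [b [c []]]]; rewrite /shift_arc /increasing; lia. Qed.

(* Minimality of [hi x] rules out back arcs leaving x and y, so both arcs are
   shifts and [lo z = hi x]. *)
Lemma shift_arc_closes_path (x y z : triple) :
  shift_arc x y -> shift_arc y z -> hi x <= hi y -> hi x <= hi z ->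
  shift_arc z x.
Proof. by rewrite /shift_arc /increasing; lia. Qed.

Lemma shift_triangle_dicycle (a b c d e : 'I_N) :
  a < b -> b < c -> c < d -> d < e ->
  dicycle shift_arc [:: (a, b, c); (b, c, d); (c, d, e)].
Proof.
move=> ab bc cd de; split=> //.
  have : uniq (map lo [:: (a, b, c); (b, c, d); (c, d, e)]).
    by rewrite /= !inE /lo /=; lia.
  exact: map_uniq.
by rewrite /= /shift_arc /increasing /lo /mid /hi /=; lia.
Qed.

Lemma shift_arc_no_long_induced_dicycle :
  ~ (exists s : seq triple, induced_dicycle shift_arc s /\ 4 <= size s).
Proof.
move=> [s [s_ind s_size]].
have [x0 x0s] : exists x0, x0 \in s.
  by case: s s_size {s_ind} => // x0 s _; exists x0; rewrite mem_head.
case: (@arg_minnP _ x0 (fun v => v \in s) hi x0s) => x xs x_min.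
have [i s' s_rot] := rot_to xs.
have := induced_dicycle_rot i s_ind; rewrite s_rot.
have : 4 <= size (x :: s') by rewrite -s_rot size_rot.
have mem_s' v : v \in s' -> v \in s.
  by move=> vs'; rewrite -(mem_rot i) s_rot inE vs' orbT.
case: s' s_rot mem_s' => [|y [|z [|w r]]] //= _ mem_s' _ ind.
have [[_ _ /and3P [xy yz _]] _] := ind.
have yin : y \in s by rewrite mem_s' ?mem_head.
have zin : z \in s by rewrite mem_s' // !inE eqxx orbT.
have /negP := induced_dicycle_no_back_chord ind; apply.
exact: shift_arc_closes_path xy yz (x_min y yin) (x_min z zin).
Qed.

Lemma shift_arc_in_C3 : in_C3 shift_arc.
Proof. split; [exact: shift_arc_TT3_free | exact: shift_arc_no_long_induced_dicycle]. Qed.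

End ShiftDigraph.

Definition no_monochromatic_shift_triangle (N : nat) (C : Type) (f : triple N -> C) : Prop :=
  forall a b c d e : 'I_N, a < b -> b < c -> c < d -> d < e ->
    f (a, b, c) = f (b, c, d) -> f (b, c, d) = f (c, d, e) -> False.

Lemma dicolouring_no_monochromatic_shift_triangle (N k : nat) (f : triple N -> 'I_k) :
  dicolouring (@shift_arc N) f -> no_monochromatic_shift_triangle f.
Proof.
move=> f_col a b c d e ab bc cd de f1 f2.
apply: (f_col (f (a, b, c))) (shift_triangle_dicycle ab bc cd de).
by move=> v; rewrite !inE => /or3P [] /eqP ->; rewrite /= ?f1 ?f2.
Qed.

Section ColouringBound.
Variables (N : nat) (C : finType) (f : triple N -> C).
Hypothesis f_mono_free : no_monochromatic_shift_triangle f.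

Definition colours_below (b c : 'I_N) : {set C} :=
  [set q | [exists a : 'I_N, (a < b) && (f (a, b, c) == q)]].

Definition continued_colours (c d : 'I_N) : {set C} :=
  [set q | [exists b : 'I_N, [&& b < c, f (b, c, d) == q & q \in colours_below b c]]].

Definition pair_label (c d : 'I_N) : {set C} * {set C} := (colours_below c d, continued_colours c d).

Definition vertex_label (d : 'I_N) : {set {set C} * {set C}} :=
  [set pair_label c d | c : 'I_N & c < d].

Lemma pair_label_shift_neq (c d e : 'I_N) :
  c < d -> d < e -> pair_label c d != pair_label d e.
Proof.
move=> cd de; apply/eqP => -[below_eq continued_eq].
have fcde_below : f (c, d, e) \in colours_below d e.
  by rewrite inE; apply/existsP; exists c; rewrite cd eqxx.
have : f (c, d, e) \in continued_colours d e.
  by rewrite inE; apply/existsP; exists c; rewrite cd eqxx below_eq fcde_below.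
rewrite -continued_eq inE => /existsP [b /and3P [bc /eqP fbcd]].
rewrite inE => /existsP [a /andP [ab /eqP fabc]].
exact: f_mono_free a b c d e ab bc cd de (etrans fabc (esym fbcd)) fbcd.
Qed.

Lemma vertex_label_inj : injective vertex_label.
Proof.
suff lt_neq (d e : 'I_N) : d < e -> vertex_label d != vertex_label e.
  move=> d e de_eq; case: (ltngtP d e) => [/lt_neq|/lt_neq|/val_inj //];
  by rewrite de_eq eqxx.
move=> de; apply/eqP => de_eq.
have : pair_label d e \in vertex_label e by apply: imset_f; rewrite inE.
rewrite -de_eq => /imsetP [c]; rewrite inE => cd /eqP.
by apply/negP; rewrite eq_sym pair_label_shift_neq.
Qed.

Lemma colouring_bound : N <= #|{set {set C} * {set C}}|.
Proof. by rewrite -{1}(card_ord N); apply: leq_card vertex_label_inj. Qed.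

End ColouringBound.

Theorem theorem1 : forall k : nat, 0 < k ->
  exists (T : finType) (e : rel T),
    [/\ simple_digraph e, in_C3 e & dichromatic_ge e k].
Proof.
move=> k _.
pose N := #|{set {set 'I_k} * {set 'I_k}}|.+1.
exists (triple N), (@shift_arc N).
split; [exact: shift_arc_simple | exact: shift_arc_in_C3 |].
move=> j jk [f f_col].
have f_mono_free := dicolouring_no_monochromatic_shift_triangle f_col.
pose g v : 'I_k := widen_ord (ltnW jk) (f v).
suff : N <= #|{set {set 'I_k} * {set 'I_k}}| by rewrite ltnn.
apply: (@colouring_bound _ _ g) => a b c d e ab bc cd de /(congr1 val) g1 /(congr1 val) g2.
by apply: (f_mono_free a b c d e ab bc cd de); apply: val_inj.
Qed.
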